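(* Let $n\ge 2$ and $q\in\{2,3\}$. Then ${\rm SL}(n,q)$ (which equals ${\rm GL}(n,2)$ when $q=2$) is generated by $x_{12}(1)=I+E_{12}$ and the $n\times n$ matrix $w$ with entry $1$ in position $(1,n)$, entry $-1$ in positions $(i+1,i)$ for $1\le i\le n-1$, and $0$ elsewhere.
   Context: $E_{ij}$ denotes the square matrix with $1$ in position $(i,j)$ and $0$ elsewhere; $x_{ij}(\alpha)=I+\alpha E_{ij}$ for $i\ne j$. *)

From HB Require Import structures.
From mathcomp Require Import all_boot all_order all_algebra all_fingroup.
Set Implicit Arguments. Unset Strict Implicit. Unset Printing Implicit Defensive.
Import GRing.Theory.
Local Open Scope ring_scope.

(* Indices are 0-based: the paper's position (i,j) is (i-1, j-1) here. *)

Definition Emx (R : nzRingType) (m a b : nat) : 'M[R]_m :=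
  \matrix_(i < m, j < m) (((i : nat) == a) && ((j : nat) == b))%:R.

Definition x12mx (R : nzRingType) (m : nat) : 'M[R]_m := 1%:M + Emx R m 0 1.

Definition wmx (R : nzRingType) (m : nat) : 'M[R]_m :=
  \matrix_(i < m, j < m)
    (if ((i : nat) == 0%N) && ((j : nat) == m.-1) then 1
     else if (i : nat) == j.+1 then -1 else 0).

From HB Require Import structures.
From mathcomp Require Import all_boot all_order all_algebra all_fingroup ring.
Import GRing.Theory.
Local Open Scope ring_scope.

(* Gaussian elimination by transvections [x_ij(a) = 1 + a E_ij] shows that SL(n, F)
   is generated by them, and over a prime field already by the [x_ij(1)].
   Conjugation by [w] maps [x_ij(1)] to [x_(i+1)(j+1)(+-1)], indices taken mod n,
   so [<x_12(1), w>] contains every [x_i(i+1)(1)]; the commutator identity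
   [[x_ij(1), x_jk(1)] = x_ik(1)] then produces all the [x_ij(1)]. *)

Set Implicit Arguments. Unset Strict Implicit. Unset Printing Implicit Defensive.

Section Transvections.
Variables (F : fieldType) (n : nat).
Implicit Types (i j k : 'I_n) (x y : F) (B : 'M[F]_n).

Definition transvection i j x : 'M[F]_n := 1%:M + x *: delta_mx i j.

Lemma transvection_mulmxE i j x B r c :
  (transvection i j x *m B) r c = B r c + (r == i)%:R * x * B j c.
Proof.
rewrite mulmxDl mul1mx -scalemxAl !mxE (bigD1 j) //= big1 ?addr0 => [|l /negPf jl].
  by rewrite mxE eqxx andbT mulrCA mulrA.
by rewrite mxE jl andbF mul0r.
Qed.

Lemma mulmx_transvectionE i j x B r c :
  (B *m transvection i j x) r c = B r c + B r i * x * (j == c)%:R.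
Proof.
rewrite mulmxDr mulmx1 -scalemxAr !mxE (bigD1 i) //= big1 ?addr0 => [|l /negPf il].
  by rewrite mxE eqxx /= mulrCA mulrA eq_sym.
by rewrite !mxE il mulr0.
Qed.

Lemma transvection0 i j : transvection i j 0 = 1%:M.
Proof. by rewrite /transvection scale0r addr0. Qed.

Lemma transvectionD i j x y :
  i != j -> transvection i j x *m transvection i j y = transvection i j (x + y).
Proof.
move=> ij; apply/matrixP => r c; rewrite transvection_mulmxE !mxE.
by rewrite (eq_sym j i) (negPf ij) /= [c == j]eq_sym; case: (r == i); case: (j == c) => /=; ring.
Qed.

Lemma trmx_transvection i j x : (transvection i j x)^T = transvection j i x.
Proof. by rewrite /transvection linearD /= trmx1 linearZ /= trmx_delta. Qed.

Lemma det_transvection i j x : i != j -> \det (transvection i j x) = 1.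
Proof.
wlog ji : i j / (j < i)%N => [hwlog ij|ij].
  case: (ltngtP i j) => [ij'||/val_inj eij]; last by rewrite eij eqxx in ij.
    by rewrite -det_tr trmx_transvection hwlog // eq_sym.
  by move=> ji; apply: hwlog.
rewrite det_trig; last first.
  apply/is_trig_mxP => r c rc; rewrite !mxE -val_eqE /= ltn_eqF // add0r.
  have /negPf-> : ~~ ((r == i) && (c == j)).
    by apply/andP => -[/eqP ri /eqP cj]; move: rc; rewrite ri cj ltnNge ltnW.
  by rewrite mulr0.
by apply: big1 => r _; rewrite !mxE eqxx; case: eqP => [->|]; rewrite ?(negPf ij) ?mulr0 ?addr0.
Qed.

Lemma invmx_transvection i j x : i != j -> invmx (transvection i j x) = transvection i j (- x).
Proof.
move=> ij; have TTN : transvection i j x *m transvection i j (- x) = 1%:M.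
  by rewrite transvectionD // subrr transvection0.
by rewrite -[RHS](mulKmx (proj1 (mulmx1_unit TTN))) TTN mulmx1.
Qed.

Lemma transvection_swap i j k x y : i != j -> j != k -> i != k ->
  transvection i j x *m transvection j k y =
  transvection i k (x * y) *m transvection j k y *m transvection i j x.
Proof.
move=> ij jk ik; apply/matrixP => r c.
rewrite -mulmxA !transvection_mulmxE !mxE !eqxx /= ![k == _]eq_sym (negPf ik) (negPf jk).
rewrite ![j == c]eq_sym; case: (r == c); case: (r == i); case: (r == j); case: (c == j);
  by case: (c == k) => /=; ring.
Qed.

End Transvections.

Section Elimination.
Variables (F : fieldType) (n : nat).
Implicit Types (i j k : 'I_n) (x : F) (A B : 'M[F]_n).
Local Notation T := (@transvection F n).

Variable P : 'M[F]_n -> Prop.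
Hypothesis P1 : P 1%:M.
Hypothesis P_mulT : forall i j x B, i != j -> P B -> P (T i j x *m B).

Definition reduces A B := \det B = \det A /\ (P B -> P A).

Lemma reduces_trans A B C : reduces A B -> reduces B C -> reduces A C.
Proof. by move=> [dAB PBA] [dBC PCB]; split; [rewrite dBC | auto]. Qed.

Lemma reduces_mulT i j x B : i != j -> reduces B (T i j x *m B).
Proof.
move=> ij; split; first by rewrite det_mulmx det_transvection // mul1r.
by move/(P_mulT (- x) ij); rewrite mulmxA transvectionD // addNr transvection0 mul1mx.
Qed.

Definition unit_cols (k : nat) B := forall i j, (j < k)%N -> B i j = (i == j)%:R.

(* Row [j >= k] of [B] vanishes in the first [k] columns. *)
Lemma unit_cols_mulT (k : nat) i j x B :
  (k <= j)%N -> unit_cols k B -> unit_cols k (T i j x *m B).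
Proof.
move=> kj Bk r c ck; rewrite transvection_mulmxE Bk // (Bk j c ck).
have /negPf-> : j != c by rewrite -val_eqE /= gtn_eqF // (leq_trans ck kj).
by rewrite mulr0 addr0.
Qed.

Lemma unit_cols_n B : unit_cols n B -> B = 1%:M.
Proof. by move=> Bn; apply/matrixP => i j; rewrite Bn // mxE. Qed.

(* If the pivot column vanishes from row [k] down, it is a combination of the unit
   columns before it, so [e_k - col k B] lies in the kernel of [B]. *)
Lemma exists_pivot k B : unit_cols k B -> \det B != 0 ->
  exists2 p : 'I_n, (k <= p)%N & B p k != 0.
Proof.
move=> Bk detB; apply/exists_inP; apply: contraNT detB => /exists_inPn Bk0.
have {}Bk0 (p : 'I_n) : (k <= p)%N -> B p k = 0 by move=> kp; apply/eqP/negbNE/Bk0.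
pose c := delta_mx k 0 - col k B.
have Bc : B *m c = 0.
  apply/eqP; rewrite mulmxBr -colE subr_eq0; apply/eqP/matrixP => r z.
  rewrite !mxE (bigD1 r) //= big1 => [|l lr]; rewrite ?addr0 !mxE.
    by case: (ltnP r k) => [rk|kr]; [rewrite (Bk r r) // eqxx mul1r | rewrite Bk0 // mulr0].
  by case: (ltnP l k) => [lk|kl]; [rewrite (Bk r l) // eq_sym (negPf lr) mul0r | rewrite Bk0 // mulr0].
apply: contraT => detB; have uB : B \in unitmx by rewrite unitmxE unitfE.
have : c k 0 = 0 by rewrite -(mulKmx uB c) Bc mulmx0 mxE.
by rewrite !mxE !eqxx Bk0 // subr0 => /eqP; rewrite oner_eq0.
Qed.

Lemma reduces_pivot_one k B : (k.+1 < n)%N -> unit_cols k B -> \det B != 0 ->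
  exists B', [/\ reduces B B', unit_cols k B' & B' k k = 1].
Proof.
move=> kn Bk detB.
have [B1 [BB1 B1k [p kp B1p]]] : exists B1, [/\ reduces B B1, unit_cols k B1 &
    exists2 p : 'I_n, (k < p)%N & B1 p k != 0].
  have [p kp Bp] := exists_pivot Bk detB.
  case: (ltnP k p) => [{}kp | pk]; first by exists B; split=> //; exists p.
  have {kp} pk : p = k by apply/val_inj/eqP; rewrite eqn_leq pk kp.
  subst p; pose s := Ordinal kn; have sk : s != k by rewrite -val_eqE /= gtn_eqF.
  exists (T s k ((1 - B s k) / B k k) *m B); split; first exact: reduces_mulT.
    exact: unit_cols_mulT.
  by exists s => //; rewrite transvection_mulmxE eqxx mul1r divfK // addrC subrK oner_eq0.
have kp' : k != p by rewrite -val_eqE /= ltn_eqF.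
exists (T k p ((1 - B1 k k) / B1 p k) *m B1); split.
- exact: reduces_trans BB1 (reduces_mulT _ _ kp').
- exact: unit_cols_mulT (ltnW kp) B1k.
- by rewrite transvection_mulmxE eqxx mul1r divfK // addrC subrK.
Qed.

(* In the last column no row below the pivot is left, but then [B] is triangular. *)
Lemma det_unit_cols_last k B : k.+1 = n -> unit_cols k B -> \det B = B k k.
Proof.
move=> kn Bk; rewrite -det_tr det_trig.
  rewrite (bigD1 k) //= big1 ?mulr1 ?mxE // => i ik; rewrite mxE Bk ?eqxx //.
  have : (i < k.+1)%N by rewrite kn.
  by rewrite ltnS leq_eqVlt val_eqE (negPf ik).
apply/is_trig_mxP => i j ij; rewrite mxE Bk; first by rewrite -val_eqE /= gtn_eqF.
have : (j < k.+1)%N by rewrite kn.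
by rewrite ltnS; apply: leq_trans.
Qed.

Lemma reduces_clear_column k B : unit_cols k B -> B k k = 1 ->
  exists B', reduces B B' /\ unit_cols k.+1 B'.
Proof.
move=> Bk Bkk.
suff [B' [BB' B'k B'kk B'0]] : exists B', [/\ reduces B B', unit_cols k B', B' k k = 1 &
    forall i, i \in enum 'I_n -> i != k -> B' i k = 0].
  exists B'; split=> // i j; rewrite ltnS leq_eqVlt => /orP[/eqP/val_inj->|]; last exact: B'k.
  by case: (eqVneq i k) => [->|ik]; [rewrite B'kk | rewrite B'0 ?mem_enum // (negPf ik)].
elim: (enum _) => [|i s [B' [BB' B'k B'kk B'0]]]; first by exists B.
case: (eqVneq i k) => [-> | ik].
  by exists B'; split=> // r; rewrite inE => /orP[/eqP->|/B'0//]; rewrite eqxx.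
exists (T i k (- B' i k) *m B'); split.
- exact: reduces_trans BB' (reduces_mulT _ _ ik).
- exact: unit_cols_mulT.
- by rewrite transvection_mulmxE eq_sym (negPf ik) !mul0r addr0.
- move=> r; rewrite inE transvection_mulmxE B'kk mulr1.
  case: (eqVneq r i) => [-> _ _ | ri /= rs rk]; first by rewrite mul1r subrr.
  by rewrite B'0 // mul0r addr0.
Qed.

Lemma reduces_next_column k B : unit_cols k B -> \det B = 1 ->
  exists B', reduces B B' /\ unit_cols k.+1 B'.
Proof.
move=> Bk detB.
have [B1 [BB1 B1k B1kk]] : exists B1, [/\ reduces B B1, unit_cols k B1 & B1 k k = 1].
  case: (ltnP k.+1 n) => [kn | nk]; first by apply: reduces_pivot_one; rewrite ?detB ?oner_eq0.
  exists B; split=> //; rewrite -(det_unit_cols_last _ Bk) //.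
  by apply/eqP; rewrite eqn_leq nk ltn_ord.
have [B' [B1B' B'k]] := reduces_clear_column B1k B1kk.
by exists B'; split=> //; exact: reduces_trans BB1 B1B'.
Qed.

Lemma det1_elim A : \det A = 1 -> P A.
Proof.
move=> detA.
suff /(_ n (leqnn n)) [B [[_ PBA] /unit_cols_n B1]] :
    forall t, (t <= n)%N -> exists B, reduces A B /\ unit_cols t B.
  by apply: PBA; rewrite B1.
elim=> [_ | t IH tn]; first by exists A; split.
have [B [AB Bt]] := IH (ltnW tn).
have [B' [BB' B't]] := reduces_next_column (k := Ordinal tn) Bt (etrans (proj1 AB) detA).
by exists B'; split=> //; exact: reduces_trans AB BB'.
Qed.

End Elimination.

Section CyclicShift.
Variables (F : fieldType) (m : nat).
Local Notation N := m.+2.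
Implicit Types (i j r c : 'I_N) (x : F).
Local Notation T := (@transvection F N).
Local Notation w := (wmx F N).

Lemma val_add1 c : val (c + 1) = if c == ord_max then 0%N else c.+1.
Proof.
rewrite /= (modn_small (_ : 1 < N)%N) // addn1 -val_eqE /=.
case: ifP => [/eqP -> | cm]; first by rewrite modnn.
by rewrite modn_small // ltn_neqAle eqSS cm ltn_ord.
Qed.

Definition wsign c : F := if c == ord_max then 1 else -1.

Lemma wsignM c : wsign c * wsign c = 1.
Proof. by rewrite /wsign; case: ifP; rewrite ?mulr1 ?mulrNN ?mulr1. Qed.

Lemma wmxE r c : w r c = (r == c + 1)%:R * wsign c.
Proof.
rewrite mxE /wsign -val_eqE val_add1 -[c == ord_max]val_eqE /=.
case: (nat_of_ord c =P m.+1) => [-> | _]; last by rewrite andbF; case: (_ == _); rewrite ?mul1r ?mul0r.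
by rewrite andbT (ltn_eqF (ltn_ord r)); case: (_ == _); rewrite ?mul1r ?mul0r.
Qed.

Lemma wmx_mul_transvection i j x :
  w *m T i j x = T (i + 1) (j + 1) (wsign i * wsign j * x) *m w.
Proof.
apply/matrixP => r c; rewrite mulmx_transvectionE transvection_mulmxE !wmxE.
rewrite (inj_eq (addIr 1)); case: (j =P c) => [<- | _]; last by rewrite mulr0n mul0r !mulr0.
rewrite /= mulr1n mul1r -!mulrA; congr (_ + _ * (_ * _)).
by rewrite mulr1 mulrCA wsignM mulr1.
Qed.

Lemma det_wmx : \det w = 1.
Proof.
have max1 : ord_max + 1 = ord0 :> 'I_N by apply/val_inj; rewrite val_add1 eqxx.
rewrite (expand_det_col _ ord_max) (bigD1 ord0) //= big1 => [|r r0]; last first.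
  by rewrite wmxE max1 (negPf r0) mulr0n !mul0r.
rewrite addr0 /cofactor.
have -> : row' ord0 (col' ord_max w) = (-1)%:M.
  apply/matrixP => r c; rewrite !mxE lift_max lift0 eqSS /= val_eqE.
  by case: (r == c).
by rewrite mxE /= det_scalar add0n eqxx mul1r -exprD addnn -signr_odd odd_double.
Qed.

Lemma unitmx_wmx : w \in unitmx.
Proof. by rewrite unitmxE det_wmx unitr1. Qed.

Lemma x12mx_transvection : x12mx F N = T 0 1 1.
Proof.
rewrite /x12mx /transvection scale1r; congr (_ + _).
by apply/matrixP => r c; rewrite !mxE.
Qed.

Lemma neq_add_natr i d : (0 < d < N)%N -> i != i + d%:R.
Proof.
move=> /andP[d0 dN]; rewrite -[X in X != _]addr0 (inj_eq (addrI i)) eq_sym.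
by rewrite Zp_nat -val_eqE /= modn_small // -lt0n.
Qed.

Lemma neq_add1 i : i != i + 1.
Proof. by rewrite -[X in _ + X]mulr1n neq_add_natr. Qed.

End CyclicShift.

Section Generation.
Variables (F : fieldType) (m : nat).
Local Notation N := m.+2.
Implicit Types (i j k : 'I_N) (x : F).
Local Notation T := (@transvection F N).

Variable Q : 'M[F]_N -> Prop.
Hypothesis Q_mul : forall A B, Q A -> Q B -> Q (A *m B).
Hypothesis Q_inv : forall A, Q A -> Q (invmx A).
Hypothesis Q_x12 : Q (x12mx F N).
Hypothesis Q_w : Q (wmx F N).

Lemma Q1 : Q 1%:M.
Proof. by rewrite -(mulVmx (unitmx_wmx F m)); apply: Q_mul (Q_inv Q_w) Q_w. Qed.

Lemma Q_transvectionN i j x : i != j -> Q (T i j x) -> Q (T i j (- x)).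
Proof. by move=> ij /Q_inv; rewrite invmx_transvection. Qed.

Lemma Q_transvection_shift i j : i != j -> Q (T i j 1) -> Q (T (i + 1) (j + 1) 1).
Proof.
move=> ij Qij; have ij1 : i + 1 != j + 1 by rewrite (inj_eq (addIr 1)).
have : Q (T (i + 1) (j + 1) (wsign F i * wsign F j)).
  rewrite -[T _ _ _](mulmxK (unitmx_wmx F m)) -[_ * _]mulr1 -wmx_mul_transvection.
  by apply: Q_mul; [apply: Q_mul | apply: Q_inv].
have [-> // | ->] : wsign F i * wsign F j = 1 \/ wsign F i * wsign F j = -1.
  by rewrite /wsign; do 2 case: ifP => _; rewrite ?mulr1 ?mulrNN ?mulr1 ?mul1r; auto.
by move/(Q_transvectionN ij1); rewrite opprK.
Qed.

Lemma Q_transvection_comm i j k : i != j -> j != k -> i != k ->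
  Q (T i j 1) -> Q (T j k 1) -> Q (T i k 1).
Proof.
move=> ij jk ik Qij Qjk.
have <- : T i j 1 *m T j k 1 *m T i j (-1) *m T j k (-1) = T i k 1.
  rewrite transvection_swap // -(mulmxA _ (T i j 1)) transvectionD // subrr transvection0.
  by rewrite mulmx1 -mulmxA transvectionD // subrr transvection0 mulmx1 mulr1.
apply: Q_mul (Q_transvectionN jk Qjk).
by apply: Q_mul (Q_transvectionN ij Qij); apply: Q_mul.
Qed.

Lemma Q_transvection_adjacent i : Q (T i (i + 1) 1).
Proof.
rewrite -[i]natr_Zp; elim: (val i) => [|d IH]; first by rewrite add0r -x12mx_transvection.
rewrite mulrSr; apply: Q_transvection_shift IH.
exact: neq_add1.
Qed.

Lemma Q_transvection1 i j : i != j -> Q (T i j 1).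
Proof.
have Qd d : (0 < d < N)%N -> Q (T i (i + d%:R) 1).
  elim: d => [// | d IH] /andP[_ dN].
  case: (posnP d) => [-> | d0]; first by rewrite mulr1n; apply: Q_transvection_adjacent.
  rewrite mulrSr addrA; apply: (@Q_transvection_comm _ (i + d%:R)).
  - by apply: neq_add_natr; rewrite d0 ltnW.
  - exact: neq_add1.
  - by rewrite -addrA -mulrSr neq_add_natr.
  - by apply: IH; rewrite d0 ltnW.
  - exact: Q_transvection_adjacent.
move=> ij; rewrite -(subrK i j) addrC -[j - i]natr_Zp; apply: Qd.
by rewrite ltn_ord andbT lt0n; move: ij; rewrite eq_sym -subr_eq0.
Qed.

Lemma det1_generated A : (forall x : F, exists d : nat, x = d%:R) -> \det A = 1 -> Q A.
Proof.
move=> Fnat; apply: (det1_elim (P := Q)) => [|i j x B ij QB]; first exact: Q1.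
apply: Q_mul QB; have [d ->] := Fnat x.
elim: d => [|d IH]; first by rewrite transvection0; apply: Q1.
by rewrite mulrSr -transvectionD //; apply: Q_mul IH (Q_transvection1 ij).
Qed.

End Generation.

Unset Implicit Arguments. Set Strict Implicit. Set Printing Implicit Defensive.

Theorem mainTheorem3 (n q : nat) (hn : (2 <= n)%N) (hq : (q == 2%N) || (q == 3%N))
  (a b : {'GL_n(q)}) :
  GLval a = x12mx 'F_q n.-1.+1 ->
  GLval b = wmx 'F_q n.-1.+1 ->
  <<[set a; b]%g>>%g = [set g : {'GL_n(q)} | \det (GLval g) == 1%R].
Proof.
case: n hn a b => [|[|m]] // _ a b ha hb.
have SL : group_set [set g : {'GL_m.+2(q)} | \det (GLval g) == 1].
  apply/group_setP; split=> [|x y]; rewrite !inE ?GL_1E ?det1 //.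
  by rewrite GL_MxE det_mulmx => /eqP-> /eqP->; rewrite mulr1.
apply/eqP; rewrite eqEsubset; apply/andP; split.
  rewrite (_ : [set g | _] = Group SL) // gen_subG; apply/subsetP => g.
  rewrite !inE => /orP[] /eqP->; rewrite ?ha ?hb ?det_wmx //.
  by rewrite x12mx_transvection det_transvection.
apply/subsetP => g; rewrite inE => /eqP detg.
pose Q (M : 'M['F_q]_m.+2) := exists2 h, h \in <<[set a; b]>>%g & GLval h = M.
suff [h hG /val_inj <- //] : Q (GLval g).
apply: det1_generated detg => [A B [h1 h1G <-] [h2 h2G <-] | A [h hG <-] | | | x].
- by exists (h1 * h2)%g; rewrite ?groupM ?GL_MxE.
- by exists h^-1%g; rewrite ?groupV ?GL_VxE.
- by exists a; rewrite ?mem_gen ?set21.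
- by exists b; rewrite ?mem_gen ?set22.
- by exists x; rewrite natr_Zp.
Qed.
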